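(* Let $\lambda>0$, $L=D^2+\lambda^2$ and $[a,b]=[0,\pi/\lambda]$. Consider partitions $\Delta=\{0=t_1<\dots<t_n=\pi/\lambda\}$ in which one subsegment $[t_j,t_{j+1}]$ has length $\pi/\lambda-\varepsilon$ (so that the sum of the lengths of all other subsegments is $\varepsilon>0$). Then, as $\varepsilon\to 0$, uniformly in such partitions and in $f\in C[a,b]$, \[ \max_{i=1,\dots,n}\bigl|P_{\mathbb{S}(L,\Delta)}f(t_i)\bigr|\le\Bigl(\frac{38}{\pi}+O(\varepsilon)\Bigr)\|f\|_\infty . \]
   Context: The space of trigonometric $L$-splines $\mathbb{S}(L,\Delta)$ consists of the continuous functions $s$ on $[a,b]$ such that on each subsegment $[t_i,t_{i+1}]$ of the partition, $s$ is a linear combination of $\sin\lambda x$ and $\cos\lambda x$. $P_{\mathbb{S}(L,\Delta)}:C[a,b]\to\mathbb{S}(L,\Delta)$ is the orthogonal projection with respect to the $L_2[a,b]$ inner product, i.e. $P f\in\mathbb{S}(L,\Delta)$ and $\langle f,s\rangle=\langle Pf,s\rangle$ for all $s\in\mathbb{S}(L,\Delta)$. $\|f\|_\infty$ denotes the uniform norm on $[a,b]$. *)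

From Stdlib Require Import Reals.
From Coquelicot Require Import Coquelicot.
Open Scope R_scope.

Definition in_seg (a b x : R) : Prop := a <= x <= b.

Definition cont_on (a b : R) (f : R -> R) : Prop :=
  forall x, in_seg a b x ->
    filterlim f (within (in_seg a b) (locally x)) (locally (f x)).

Definition sup_norm (a b : R) (f : R -> R) : R :=
  real (Lub_Rbar (fun y => exists x, in_seg a b x /\ y = Rabs (f x))).

Definition L2ip (a b : R) (f g : R -> R) : R := RInt (fun x => f x * g x) a b.

Definition is_partition (a b : R) (n : nat) (t : nat -> R) : Prop :=
  (0 < n)%nat /\ t 0%nat = a /\ t n = b /\
  (forall i, (i < n)%nat -> t i < t (S i)).

Definition trig_spline (lam a b : R) (n : nat) (t : nat -> R) (s : R -> R) : Prop :=
  cont_on a b s /\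
  forall i, (i < n)%nat ->
    exists alpha beta : R, forall x, t i <= x <= t (S i) ->
      s x = alpha * sin (lam * x) + beta * cos (lam * x).

Definition is_orth_proj (lam a b : R) (n : nat) (t : nat -> R) (f p : R -> R) : Prop :=
  trig_spline lam a b n t p /\
  forall s, trig_spline lam a b n t s -> L2ip a b f s = L2ip a b p s.

(* On each piece the splines are spanned by the two functions of span{sin (lam x), cos (lam x)}
   that interpolate 1, 0 and 0, 1 at its end points; gluing them gives hat functions [hat k]
   (1 at the node t k, 0 at the others), which form a basis.  The projection therefore exists
   (Gram-Schmidt) and is determined by its nodal values c k = P f (t k), which solve the Gram
   system <P f, hat k> = <f, hat k>.  Let |c k| be maximal.  If t k is not an end point of the
   long piece, both pieces at t k are short and row k is diagonally dominant (the off-diagonal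
   entry is about half the diagonal one), giving |c k| <= 4 ||f||.  Otherwise combine the rows of
   both end points t j, t (j+1) of the long piece: there both entries of the Gram block blow up
   like 1/(lam eps)^2 while their difference stays >= 1/2, so c j + c (j+1) = O(eps) ||f||
   while |c j - c (j+1)| <= 4 PI ||f|| + O(eps) max |c k|.  Hence max |c k| <= 9 ||f||, and
   9 < 38 / PI, so the O(eps) term of the statement can be taken to be 0. *)

From Stdlib Require Import Reals Lra Lia Psatz.
From Coquelicot Require Import Coquelicot.
Open Scope R_scope.

(** * Continuity and integrals on R *)

(* The point of [a,b] nearest to [y]; composing with it extends a function of C[a,b]
   to a continuous function on R. *)
Definition clamp (a b y : R) : R := (a + b + Rabs (y - a) - Rabs (y - b)) / 2.

Lemma clamp_lo a b y : a <= b -> y <= a -> clamp a b y = a.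
Proof.
  intros. unfold clamp.
  rewrite (Rabs_left1 (y - a)), (Rabs_left1 (y - b)) by lra. field.
Qed.

Lemma clamp_hi a b y : a <= b -> b <= y -> clamp a b y = b.
Proof.
  intros. unfold clamp.
  rewrite (Rabs_pos_eq (y - a)), (Rabs_pos_eq (y - b)) by lra. field.
Qed.

Lemma clamp_id a b y : a <= y <= b -> clamp a b y = y.
Proof.
  intros. unfold clamp.
  rewrite (Rabs_pos_eq (y - a)), (Rabs_left1 (y - b)) by lra. field.
Qed.

Lemma clamp_in a b y : a <= b -> a <= clamp a b y <= b.
Proof.
  intros. destruct (Rle_dec y a); [rewrite clamp_lo; lra|].
  destruct (Rle_dec b y); [rewrite clamp_hi; lra|]. rewrite clamp_id; lra.
Qed.

Definition cont (f : R -> R) : Prop := forall x, continuous f x.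

Lemma cont_const c : cont (fun _ => c).
Proof. intros x. apply continuous_const. Qed.

Lemma cont_plus f g : cont f -> cont g -> cont (fun x => f x + g x).
Proof. intros Hf Hg x. apply (continuous_plus f g); auto. Qed.

Lemma cont_minus f g : cont f -> cont g -> cont (fun x => f x - g x).
Proof. intros Hf Hg x. apply (continuous_minus f g); auto. Qed.

Lemma cont_mult f g : cont f -> cont g -> cont (fun x => f x * g x).
Proof. intros Hf Hg x. apply (continuous_mult f g); auto. Qed.

Lemma cont_comp f g : cont f -> cont g -> cont (fun x => g (f x)).
Proof. intros Hf Hg x. apply (continuous_comp f g); auto. Qed.

Lemma cont_Rabs f : cont f -> cont (fun x => Rabs (f x)).
Proof. intros Hf. apply (cont_comp f Rabs Hf). intros x. apply continuous_Rabs. Qed.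

Lemma cont_of_derivable f : (forall x, ex_derive f x) -> cont f.
Proof. intros Hf x. apply (ex_derive_continuous (K := R_AbsRing) (V := R_NormedModule)), Hf. Qed.

Lemma cont_clamp a b : cont (clamp a b).
Proof.
  unfold clamp. apply cont_mult; [|apply cont_const].
  apply cont_minus; [apply cont_plus; [apply cont_const|]|];
    apply cont_Rabs, cont_minus; try apply cont_const; intros x; apply continuous_id.
Qed.

Lemma cont_cont_on a b g : cont g -> cont_on a b g.
Proof. intros Hg x _. eapply filterlim_filter_le_1; [apply filter_le_within|apply Hg]. Qed.

Lemma cont_on_clamp a b f : a <= b -> cont_on a b f -> cont (fun x => f (clamp a b x)).
Proof.
  intros Hab Hf x.
  apply (filterlim_comp _ _ _ (clamp a b) f _ (within (in_seg a b) (locally (clamp a b x)))).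
  - intros P HP. unfold filtermap.
    eapply filter_imp; [|exact (cont_clamp a b x _ HP)].
    intros y Hy. apply Hy, clamp_in, Hab.
  - apply Hf, clamp_in, Hab.
Qed.

Lemma sup_norm_ge a b f x : cont_on a b f -> a <= x <= b -> Rabs (f x) <= sup_norm a b f.
Proof.
  intros Hf Hx. assert (Hab : a <= b) by lra.
  destruct (continuity_ab_maj (fun y => Rabs (f (clamp a b y))) a b Hab) as [xm [Hxm _]].
  { intros y _. apply continuity_pt_filterlim.
    apply (cont_Rabs (fun y => f (clamp a b y))), cont_on_clamp; assumption. }
  unfold sup_norm.
  destruct (Lub_Rbar_correct (fun y => exists x, in_seg a b x /\ y = Rabs (f x))) as [Hub Hlub].
  assert (Hle : Rbar_le (Lub_Rbar (fun y => exists x, in_seg a b x /\ y = Rabs (f x)))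
                        (Rabs (f (clamp a b xm)))).
  { apply Hlub. intros y [z [Hz ->]]. simpl.
    rewrite <- (clamp_id a b z) by exact Hz. apply Hxm, Hz. }
  assert (Hge : Rbar_le (Rabs (f x))
                        (Lub_Rbar (fun y => exists x, in_seg a b x /\ y = Rabs (f x)))).
  { apply Hub. exists x. split; [exact Hx|reflexivity]. }
  destruct (Lub_Rbar _); simpl in *; tauto.
Qed.

Lemma sup_norm_ge0 a b f : a <= b -> cont_on a b f -> 0 <= sup_norm a b f.
Proof.
  intros Hab Hf. apply Rle_trans with (Rabs (f a)); [apply Rabs_pos|].
  apply sup_norm_ge; [exact Hf|lra].
Qed.

Lemma cont_ex_RInt f a b : cont f -> ex_RInt f a b.
Proof. intros H. apply (ex_RInt_continuous (V := R_CompleteNormedModule)). intros; apply H. Qed.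

Lemma RInt_ext_seg (f g : R -> R) a b : a <= b -> (forall x, a < x < b -> f x = g x) ->
  RInt f a b = RInt g a b.
Proof.
  intros Hab H. apply (RInt_ext (V := R_CompleteNormedModule)).
  rewrite Rmin_left, Rmax_right by exact Hab. exact H.
Qed.

Lemma RInt_ext_R (f g : R -> R) a b : (forall x, f x = g x) -> RInt f a b = RInt g a b.
Proof. intros H. apply (RInt_ext (V := R_CompleteNormedModule)). intros x _. apply H. Qed.

Lemma RInt_zero a b : RInt (fun _ => 0) a b = 0.
Proof. rewrite (RInt_const (V := R_CompleteNormedModule)). apply Rmult_0_r. Qed.

Lemma RInt_scal_R f a b r : ex_RInt f a b -> RInt (fun x => r * f x) a b = r * RInt f a b.
Proof.
  intros Hf. change (RInt (fun x => scal r (f x)) a b = scal r (RInt f a b)).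
  apply (RInt_scal (V := R_CompleteNormedModule)), Hf.
Qed.

Lemma RInt_plus_R f g a b : ex_RInt f a b -> ex_RInt g a b ->
  RInt (fun x => f x + g x) a b = RInt f a b + RInt g a b.
Proof.
  intros Hf Hg. change (RInt (fun x => plus (f x) (g x)) a b = plus (RInt f a b) (RInt g a b)).
  apply (RInt_plus (V := R_CompleteNormedModule)); assumption.
Qed.

Lemma RInt_minus_R f g a b : ex_RInt f a b -> ex_RInt g a b ->
  RInt (fun x => f x - g x) a b = RInt f a b - RInt g a b.
Proof.
  intros Hf Hg. change (RInt (fun x => minus (f x) (g x)) a b = minus (RInt f a b) (RInt g a b)).
  apply (RInt_minus (V := R_CompleteNormedModule)); assumption.
Qed.

Lemma RInt_Chasles_R f a b c : cont f -> RInt f a b + RInt f b c = RInt f a c.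
Proof. intros Hf. apply (RInt_Chasles (V := R_CompleteNormedModule)); apply cont_ex_RInt, Hf. Qed.

Lemma abs_RInt_weighted_le F K N a b : a <= b -> cont F -> cont K ->
  (forall x, a <= x <= b -> 0 <= K x /\ Rabs (F x) <= N) ->
  Rabs (RInt (fun x => F x * K x) a b) <= N * RInt K a b.
Proof.
  intros Hab HF HK H.
  eapply Rle_trans; [apply abs_RInt_le; [exact Hab|apply cont_ex_RInt, cont_mult; auto]|].
  rewrite <- RInt_scal_R by (apply cont_ex_RInt, HK).
  apply RInt_le; [exact Hab|apply cont_ex_RInt, cont_Rabs, cont_mult; auto|
                  apply cont_ex_RInt, cont_mult; [apply cont_const|exact HK]|].
  intros x Hx. destruct (H x ltac:(lra)) as [HKx HFx].
  rewrite Rabs_mult, (Rabs_pos_eq (K x)) by exact HKx. apply Rmult_le_compat_r; assumption.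
Qed.

(** * Orthogonal coefficients *)

Fixpoint lin_comb (ph : nat -> R -> R) (c : nat -> R) (K : nat) (x : R) : R :=
  match K with
  | O => 0
  | S K' => lin_comb ph c K' x + c K' * ph K' x
  end.

Lemma cont_lin_comb ph c K : (forall k, cont (ph k)) -> cont (lin_comb ph c K).
Proof.
  intros H. induction K as [|K IH]; simpl; [apply cont_const|].
  apply cont_plus, cont_mult; auto. apply cont_const.
Qed.

Lemma lin_comb_plus_scal ph c d r K x :
  lin_comb ph (fun m => c m + r * d m) K x = lin_comb ph c K x + r * lin_comb ph d K x.
Proof. induction K as [|K IH]; simpl; [ring|]. rewrite IH. ring. Qed.

Lemma eq_lin_comb ph ph' c c' K x :
  (forall k, (k < K)%nat -> c k = c' k /\ ph k x = ph' k x) ->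
  lin_comb ph c K x = lin_comb ph' c' K x.
Proof.
  intros H. induction K as [|K IH]; simpl; [reflexivity|].
  destruct (H K ltac:(lia)) as [-> ->]. rewrite IH by (intros; apply H; lia). reflexivity.
Qed.

Lemma lin_comb_update ph c d r al K x :
  lin_comb ph (fun m => if Nat.ltb m K then c m + r * d m else al) (S K) x
  = lin_comb ph c K x + r * lin_comb ph d K x + al * ph K x.
Proof.
  simpl. rewrite Nat.ltb_irrefl, <- lin_comb_plus_scal.
  f_equal. apply eq_lin_comb. intros m Hm. rewrite (proj2 (Nat.ltb_lt m K) Hm). split; reflexivity.
Qed.

Lemma L2ip_comm a b g h : L2ip a b g h = L2ip a b h g.
Proof. unfold L2ip. apply RInt_ext_R. intros; ring. Qed.

Lemma L2ip_ext a b g g' h h' : a <= b ->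
  (forall x, a < x < b -> g x = g' x /\ h x = h' x) -> L2ip a b g h = L2ip a b g' h'.
Proof.
  intros Hab H. apply RInt_ext_seg; [exact Hab|].
  intros x Hx. destruct (H x Hx) as [-> ->]. reflexivity.
Qed.

Lemma L2ip_plus_scal_l a b g1 g2 h r : cont g1 -> cont g2 -> cont h ->
  L2ip a b (fun x => g1 x + r * g2 x) h = L2ip a b g1 h + r * L2ip a b g2 h.
Proof.
  intros. unfold L2ip. rewrite <- RInt_scal_R, <- RInt_plus_R by
    (apply cont_ex_RInt; repeat apply cont_mult; auto; apply cont_const).
  apply RInt_ext_R. intros; ring.
Qed.

Lemma L2ip_plus_scal_r a b g h1 h2 r : cont g -> cont h1 -> cont h2 ->
  L2ip a b g (fun x => h1 x + r * h2 x) = L2ip a b g h1 + r * L2ip a b g h2.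
Proof. intros. rewrite !(L2ip_comm a b g). apply L2ip_plus_scal_l; assumption. Qed.

Lemma L2ip_minus_l a b g1 g2 h : cont g1 -> cont g2 -> cont h ->
  L2ip a b (fun x => g1 x - g2 x) h = L2ip a b g1 h - L2ip a b g2 h.
Proof.
  intros. transitivity (L2ip a b (fun x => g1 x + (-1) * g2 x) h).
  - unfold L2ip. apply RInt_ext_R. intros; ring.
  - rewrite L2ip_plus_scal_l by assumption. ring.
Qed.

Lemma L2ip_lin_comb_r_eq0 a b g ph c K : (forall k, cont (ph k)) -> cont g ->
  (forall k, (k < K)%nat -> L2ip a b g (ph k) = 0) -> L2ip a b g (lin_comb ph c K) = 0.
Proof.
  intros Hph Hg H. induction K as [|K IH]; simpl.
  - unfold L2ip. rewrite (RInt_ext_R _ (fun _ => 0)) by (intros; ring). apply RInt_zero.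
  - rewrite L2ip_plus_scal_r, IH, H by (auto using cont_lin_comb). ring.
Qed.

Lemma L2ip_self_ge0 a b g : a <= b -> cont g -> 0 <= L2ip a b g g.
Proof.
  intros Hab Hg. apply RInt_ge_0; [exact Hab|apply cont_ex_RInt, cont_mult; auto|].
  intros. apply Rle_0_sqr.
Qed.

Lemma L2ip_eq0_of_self_eq0 a b g h : a <= b -> cont g -> cont h ->
  L2ip a b h h = 0 -> L2ip a b g h = 0.
Proof.
  intros Hab Hg Hh H0.
  assert (Hq : forall r, 0 <= L2ip a b g g + 2 * r * L2ip a b g h).
  { intros r. assert (Hgr : cont (fun x => g x + r * h x))
      by (apply cont_plus, cont_mult; auto; apply cont_const).
    pose proof (L2ip_self_ge0 a b _ Hab Hgr) as Hpos.
    rewrite L2ip_plus_scal_l, !L2ip_plus_scal_r, H0, (L2ip_comm a b h g) in Hpos by assumption.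
    lra. }
  destruct (Req_dec (L2ip a b g h) 0) as [E|E]; [exact E|].
  specialize (Hq (- (L2ip a b g g + 1) / (2 * L2ip a b g h))).
  replace (2 * (- (L2ip a b g g + 1) / (2 * L2ip a b g h)) * L2ip a b g h)
    with (- (L2ip a b g g + 1)) in Hq by (field; exact E).
  lra.
Qed.

(* Gram-Schmidt: the part [r] of [ph K] orthogonal to the earlier functions corrects the
   coefficients of [f] found for them. *)
Lemma exists_orth_coeffs a b ph : a <= b -> (forall k, cont (ph k)) ->
  forall K f, cont f -> exists c, forall k, (k < K)%nat ->
    L2ip a b f (ph k) = L2ip a b (lin_comb ph c K) (ph k).
Proof.
  intros Hab Hph K. induction K as [|K IH]; intros f Hf.
  - exists (fun _ => 0). intros; lia.
  - destruct (IH f Hf) as [c Hc]. destruct (IH (ph K) (Hph K)) as [d Hd].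
    set (r := fun x => ph K x - lin_comb ph d K x).
    set (h := fun x => f x - lin_comb ph c K x).
    assert (Hr : cont r) by (apply cont_minus, cont_lin_comb; auto).
    assert (Hh : cont h) by (apply cont_minus, cont_lin_comb; auto).
    assert (Hr_orth : forall k, (k < K)%nat -> L2ip a b r (ph k) = 0).
    { intros k Hk. unfold r. rewrite L2ip_minus_l, Hd by auto using cont_lin_comb. ring. }
    assert (Hh_orth : forall k, (k < K)%nat -> L2ip a b h (ph k) = 0).
    { intros k Hk. unfold h. rewrite L2ip_minus_l, Hc by auto using cont_lin_comb. ring. }
    set (al := if Req_EM_T (L2ip a b r r) 0 then 0 else L2ip a b h r / L2ip a b r r).
    assert (Hal : L2ip a b h r = al * L2ip a b r r).
    { unfold al. destruct (Req_EM_T (L2ip a b r r) 0) as [E|E].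
      - rewrite L2ip_eq0_of_self_eq0, E by assumption. ring.
      - field. exact E. }
    assert (Hr_K : forall g, cont g -> (forall k, (k < K)%nat -> L2ip a b g (ph k) = 0) ->
                   L2ip a b g (ph K) = L2ip a b g r).
    { intros g Hg Hg_orth.
      transitivity (L2ip a b g (fun x => r x + 1 * lin_comb ph d K x)).
      - unfold L2ip. apply RInt_ext_R. intros x. unfold r. ring.
      - rewrite L2ip_plus_scal_r, L2ip_lin_comb_r_eq0 by auto using cont_lin_comb. ring. }
    exists (fun m => if Nat.ltb m K then c m + (- al) * d m else al). intros k Hk.
    transitivity (L2ip a b (fun x => lin_comb ph c K x + al * r x) (ph k)).
    2: { unfold L2ip. apply RInt_ext_R. intros x. rewrite lin_comb_update. unfold r. ring. }
    rewrite L2ip_plus_scal_l by auto using cont_lin_comb.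
    destruct (Nat.eq_dec k K) as [->|Hne].
    + assert (Hf_h : L2ip a b f (ph K) = L2ip a b (lin_comb ph c K) (ph K) + L2ip a b h (ph K)).
      { unfold h. rewrite L2ip_minus_l by auto using cont_lin_comb. ring. }
      rewrite Hf_h, (Hr_K h Hh Hh_orth), (Hr_K r Hr Hr_orth), Hal. ring.
    + rewrite Hr_orth, Hc by lia. ring.
Qed.

Lemma L2ip_clamp a b g h : a <= b -> L2ip a b (fun x => g (clamp a b x)) h = L2ip a b g h.
Proof.
  intros Hab. apply L2ip_ext; [exact Hab|].
  intros x Hx. rewrite clamp_id by lra. split; reflexivity.
Qed.

(** * Trigonometric estimates *)

Lemma sin_taylor_bounds x : 0 <= x <= 1 -> x - x^3/6 <= sin x <= x - x^3/6 + x^5/120.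
Proof.
  intros Hx. destruct (pre_sin_bound x 0) as [H1 H2]; [lra|lra|].
  unfold sin_approx, sin_term in H1, H2. simpl in H1, H2. split; lra.
Qed.

Lemma cos_taylor_bounds x : 0 <= x <= 1 -> 1 - x^2/2 <= cos x <= 1 - x^2/2 + x^4/24.
Proof.
  intros Hx. destruct (pre_cos_bound x 0) as [H1 H2]; [lra|lra|].
  unfold cos_approx, cos_term in H1, H2. simpl in H1, H2. split; lra.
Qed.

Lemma PI_ge_8_3 : 8/3 <= PI.
Proof. pose proof (PI_ineq 0) as [H _]. unfold tg_alt, PI_tg in H. simpl in H. lra. Qed.

(* Gram entries (times [lam]) of the basis [lagr_a], [lagr_b] below on a piece of scaled length
   [h]; see [RInt_lagr_a_sqr] and the following lemmas. *)
Definition gram_diag h := (h/2 - sin (2*h)/4) / (sin h)^2.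
Definition gram_off h := (sin h - h * cos h) / (2 * (sin h)^2).
Definition hat_mass h := (1 - cos h) / sin h.

Lemma short_piece_coefs h : 0 < h <= 1/50 ->
  hat_mass h / 4 <= gram_diag h - gram_off h /\ gram_diag h + gram_off h <= h /\
  0 <= gram_off h /\ 0 < hat_mass h <= h.
Proof.
  intros Hh.
  destruct (sin_taylor_bounds h) as [s1 s2]; [lra|].
  destruct (cos_taylor_bounds h) as [c1 c2]; [lra|].
  unfold gram_diag, gram_off, hat_mass. rewrite sin_2a.
  set (s := sin h) in *. set (c := cos h) in *.
  assert (H3 : h^3 <= h^2/50) by (simpl; nra).
  assert (H5 : h^5 <= h^3/2500) by (simpl; nra).
  assert (Hs : 0 < s) by (simpl in *; nra).
  assert (Hc1 : c <= 1) by apply COS_bound.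
  assert (Hs2 : 0 < s^2) by (simpl; nra).
  split; [|split; [|split]].
  - apply (Rmult_le_reg_r (4 * s^2)); [lra|].
    replace ((1 - c) / s / 4 * (4 * s ^ 2)) with ((1 - c) * s) by (field; lra).
    replace (((h / 2 - 2 * s * c / 4) / s ^ 2 - (s - h * c) / (2 * s ^ 2)) * (4 * s ^ 2))
      with (2*h - 2*s*c - 2*s + 2*h*c) by (field; lra).
    assert (Hsu : s * (3 + c) <= (h - h^3/6 + h^5/120) * (3 + c))
      by (apply Rmult_le_compat_r; simpl in *; nra).
    assert (Hcl : (1 - h^2/2) * (2*h - (h - h^3/6 + h^5/120)) <= c * (2*h - (h - h^3/6 + h^5/120)))
      by (apply Rmult_le_compat_r; simpl in *; nra).
    simpl in *. nra.
  - apply (Rmult_le_reg_r (2 * s^2)); [lra|].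
    replace (((h / 2 - 2 * s * c / 4) / s ^ 2 + (s - h * c) / (2 * s ^ 2)) * (2 * s ^ 2))
      with ((h + s) * (1 - c)) by (field; lra).
    assert (Hm : (h + s) * (1 - c) <= (2 * h) * (h^2/2))
      by (apply Rmult_le_compat; simpl in *; nra).
    assert (Hs3 : (h - h^3/6)^2 <= s^2) by (apply pow_incr; simpl in *; nra).
    simpl in *. nra.
  - apply Rmult_le_pos; [|apply Rlt_le, Rinv_0_lt_compat; lra].
    assert (h * c <= h * (1 - h^2/2 + h^4/24)) by (apply Rmult_le_compat_l; lra).
    simpl in *. nra.
  - split.
    + apply Rmult_lt_0_compat; [simpl in *; nra|apply Rinv_0_lt_compat; lra].
    + apply (Rmult_le_reg_r s); [lra|]. unfold Rdiv. rewrite Rmult_assoc, Rinv_l by lra.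
      simpl in *. nra.
Qed.

Lemma long_piece_coefs e : 0 < e <= 1/50 ->
  1/2 <= gram_diag (PI - e) - gram_off (PI - e) /\
  2 / (sin e)^2 <= gram_diag (PI - e) + gram_off (PI - e) /\
  hat_mass (PI - e) <= 2 / sin e /\ 0 < sin e <= e.
Proof.
  intros He.
  destruct (sin_taylor_bounds e) as [s1 s2]; [lra|].
  destruct (cos_taylor_bounds e) as [c1 c2]; [lra|].
  pose proof PI_ge_8_3. pose proof PI_4.
  assert (Es : sin (PI - e) = sin e) by apply sin_PI_x.
  assert (Ec : cos (PI - e) = - cos e) by (rewrite cos_minus, cos_PI, sin_PI; ring).
  unfold gram_diag, gram_off, hat_mass. rewrite sin_2a, Es, Ec.
  set (s := sin e) in *. set (c := cos e) in *.
  assert (H3 : e^3 <= e^2/50) by (simpl; nra).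
  assert (H5 : e^5 <= e^3/2500) by (simpl; nra).
  assert (Hs : 0 < s) by (simpl in *; nra).
  assert (Hc : -1 <= c <= 1) by apply COS_bound.
  assert (Hse : s <= e) by (simpl in *; nra).
  assert (Hs2 : 0 < s^2) by (simpl; nra).
  split; [|split; [|split]].
  - apply (Rmult_le_reg_r (2 * s^2)); [lra|].
    replace ((((PI - e) / 2 - 2 * s * - c / 4) / s ^ 2 - (s - (PI - e) * - c) / (2 * s ^ 2))
               * (2 * s ^ 2))
      with ((1 - c) * (PI - e - s)) by (field; lra).
    assert (Hm : (e^2/2 - e^4/24) * (5/2) <= (1 - c) * (PI - e - s))
      by (apply Rmult_le_compat; simpl in *; nra).
    assert (s^2 <= e^2) by (apply pow_incr; lra).
    simpl in *. nra.
  - apply (Rmult_le_reg_r (s^2)); [lra|].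
    replace (2 / s ^ 2 * s ^ 2) with 2 by (field; lra).
    replace ((((PI - e) / 2 - 2 * s * - c / 4) / s ^ 2 + (s - (PI - e) * - c) / (2 * s ^ 2))
               * s ^ 2)
      with (((PI - e) * (1 + c) + s * (1 + c)) / 2) by (field; lra).
    assert (Hm : (5/2) * (19/10) <= (PI - e) * (1 + c))
      by (apply Rmult_le_compat; simpl in *; nra).
    assert (0 <= s * (1 + c)) by (apply Rmult_le_pos; lra).
    lra.
  - unfold Rdiv. apply Rmult_le_compat_r; [apply Rlt_le, Rinv_0_lt_compat|]; lra.
  - lra.
Qed.

Lemma abs_sin_diff_div_le p q h : p + q = h -> 0 < h < PI -> 1/2 <= sin (h/2) ->
  Rabs ((sin p - sin q) / sin h) <= 2.
Proof.
  intros Hpq Hh Hs. rewrite form4, Hpq.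
  replace (sin h) with (2 * sin (h/2) * cos (h/2)) by (rewrite <- sin_2a; f_equal; field).
  assert (0 < cos (h/2)) by (apply cos_gt_0; lra).
  replace (2 * cos (h / 2) * sin ((p - q) / 2) / (2 * sin (h / 2) * cos (h / 2)))
    with (sin ((p - q) / 2) / sin (h/2)) by (field; lra).
  unfold Rdiv. rewrite Rabs_mult, (Rabs_pos_eq (/ _)) by (apply Rlt_le, Rinv_0_lt_compat; lra).
  assert (Rabs (sin ((p - q) / 2)) <= 1) by (apply Rabs_le, SIN_bound).
  assert (/ sin (h/2) <= 2)
    by (apply Rle_trans with (/ (1/2)); [apply Rinv_le_contravar; lra|lra]).
  assert (0 <= / sin (h/2)) by (apply Rlt_le, Rinv_0_lt_compat; lra).
  pose proof (Rabs_pos (sin ((p - q) / 2))). nra.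
Qed.

(** * Interpolation on one piece *)

Lemma RInt_of_antiderivative (F f : R -> R) a b :
  (forall x, is_derive F x (f x)) -> cont f -> RInt f a b = F b - F a.
Proof.
  intros HF Hf. apply is_RInt_unique, (is_RInt_derive (V := R_CompleteNormedModule)).
  - intros; apply HF.
  - intros; apply Hf.
Qed.

(* The basis of span{sin (lam x), cos (lam x)} dual to evaluation at [a] and at [b]. *)
Definition lagr_a lam a b y := sin (lam * (b - y)) / sin (lam * (b - a)).
Definition lagr_b lam a b y := sin (lam * (y - a)) / sin (lam * (b - a)).

Lemma cont_lagr_a lam a b : cont (lagr_a lam a b).
Proof. apply cont_of_derivable. intros x. unfold lagr_a. auto_derive. exact I. Qed.

Lemma cont_lagr_b lam a b : cont (lagr_b lam a b).
Proof. apply cont_of_derivable. intros x. unfold lagr_b. auto_derive. exact I. Qed.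

Lemma lagr_a_trig lam a b : exists al be, forall y,
  lagr_a lam a b y = al * sin (lam * y) + be * cos (lam * y).
Proof.
  exists (- cos (lam * b) / sin (lam * (b - a))), (sin (lam * b) / sin (lam * (b - a))).
  intros y. unfold lagr_a. rewrite Rmult_minus_distr_l, sin_minus. unfold Rdiv. ring.
Qed.

Lemma lagr_b_trig lam a b : exists al be, forall y,
  lagr_b lam a b y = al * sin (lam * y) + be * cos (lam * y).
Proof.
  exists (cos (lam * a) / sin (lam * (b - a))), (- sin (lam * a) / sin (lam * (b - a))).
  intros y. unfold lagr_b. rewrite Rmult_minus_distr_l, sin_minus. unfold Rdiv. ring.
Qed.

Lemma lagr_a_at_b lam a b : lagr_a lam a b b = 0.
Proof. unfold lagr_a. rewrite Rminus_diag, Rmult_0_r, sin_0. apply Rdiv_0_l. Qed.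

Lemma lagr_b_at_a lam a b : lagr_b lam a b a = 0.
Proof. unfold lagr_b. rewrite Rminus_diag, Rmult_0_r, sin_0. apply Rdiv_0_l. Qed.

Section Piece.
Variables lam a b : R.
Hypothesis Hlam : 0 < lam.
Hypothesis Hab : a < b.
Hypothesis Hpi : lam * (b - a) < PI.

Let sin_pos : 0 < sin (lam * (b - a)).
Proof. apply sin_gt_0; [apply Rmult_lt_0_compat|]; lra. Qed.

Lemma lagr_a_at_a : lagr_a lam a b a = 1.
Proof. unfold lagr_a. field. lra. Qed.

Lemma lagr_b_at_b : lagr_b lam a b b = 1.
Proof. unfold lagr_b. field. lra. Qed.

Lemma lagr_a_ge0 y : a <= y <= b -> 0 <= lagr_a lam a b y.
Proof.
  intros Hy. unfold lagr_a. apply Rdiv_le_0_compat; [|exact sin_pos].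
  apply sin_ge_0; [apply Rmult_le_pos; lra|].
  apply Rle_trans with (lam * (b - a)); [apply Rmult_le_compat_l|]; lra.
Qed.

Lemma lagr_b_ge0 y : a <= y <= b -> 0 <= lagr_b lam a b y.
Proof.
  intros Hy. unfold lagr_b. apply Rdiv_le_0_compat; [|exact sin_pos].
  apply sin_ge_0; [apply Rmult_le_pos; lra|].
  apply Rle_trans with (lam * (b - a)); [apply Rmult_le_compat_l|]; lra.
Qed.

Lemma trig_interp al be y :
  let g := fun x => al * sin (lam * x) + be * cos (lam * x) in
  g y = g a * lagr_a lam a b y + g b * lagr_b lam a b y.
Proof.
  intros g. unfold g, lagr_a, lagr_b.
  pose proof sin_pos as Hs.
  rewrite !Rmult_minus_distr_l, !sin_minus in *. field. lra.
Qed.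

Lemma RInt_lagr_a_sqr :
  lam * RInt (fun x => lagr_a lam a b x * lagr_a lam a b x) a b = gram_diag (lam * (b - a)).
Proof.
  pose proof sin_pos.
  rewrite (RInt_of_antiderivative
    (fun x => - (lam * (b - x) / 2 - sin (2 * (lam * (b - x))) / 4)
              / (lam * (sin (lam * (b - a)))^2))).
  - unfold gram_diag. rewrite Rminus_diag, Rmult_0_r, Rmult_0_r, sin_0. field. split; lra.
  - intros x. auto_derive; [exact I|]. unfold lagr_a.
    replace (b + - x) with (b - x) by ring. rewrite cos_2a_sin. field. split; lra.
  - apply cont_mult; apply cont_lagr_a.
Qed.

Lemma RInt_lagr_b_sqr :
  lam * RInt (fun x => lagr_b lam a b x * lagr_b lam a b x) a b = gram_diag (lam * (b - a)).
Proof.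
  pose proof sin_pos.
  rewrite (RInt_of_antiderivative
    (fun x => (lam * (x - a) / 2 - sin (2 * (lam * (x - a))) / 4)
              / (lam * (sin (lam * (b - a)))^2))).
  - unfold gram_diag. rewrite (Rminus_diag a), Rmult_0_r, Rmult_0_r, sin_0. field. split; lra.
  - intros x. auto_derive; [exact I|]. unfold lagr_b.
    replace (x + - a) with (x - a) by ring. rewrite cos_2a_sin. field. split; lra.
  - apply cont_mult; apply cont_lagr_b.
Qed.

Lemma RInt_lagr_a_lagr_b :
  lam * RInt (fun x => lagr_a lam a b x * lagr_b lam a b x) a b = gram_off (lam * (b - a)).
Proof.
  pose proof sin_pos.
  rewrite (RInt_of_antiderivative
    (fun x => (- sin (lam * (a + b - 2 * x)) / (2 * lam) - x * cos (lam * (b - a)))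
              / (2 * (sin (lam * (b - a)))^2))).
  - unfold gram_off.
    replace (lam * (a + b - 2 * b)) with (- (lam * (b - a))) by ring.
    replace (lam * (a + b - 2 * a)) with (lam * (b - a)) by ring.
    rewrite sin_neg. field. split; lra.
  - intros x. auto_derive; [exact I|]. unfold lagr_a, lagr_b.
    replace (lam * (a + b + - (2 * x))) with (lam * (b - x) - lam * (x - a)) by ring.
    replace (lam * (b - a)) with (lam * (b - x) + lam * (x - a)) by ring.
    rewrite cos_minus, cos_plus. field.
    replace (lam * (b - x) + lam * (x - a)) with (lam * (b - a)) by ring. split; lra.
  - apply cont_mult; [apply cont_lagr_a|apply cont_lagr_b].
Qed.

Lemma RInt_lagr_a : lam * RInt (lagr_a lam a b) a b = hat_mass (lam * (b - a)).
Proof.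
  pose proof sin_pos.
  rewrite (RInt_of_antiderivative (fun x => cos (lam * (b - x)) / (lam * sin (lam * (b - a))))).
  - unfold hat_mass. rewrite Rminus_diag, Rmult_0_r, cos_0. field. split; lra.
  - intros x. auto_derive; [exact I|]. unfold lagr_a.
    replace (b + - x) with (b - x) by ring. field. split; lra.
  - apply cont_lagr_a.
Qed.

Lemma RInt_lagr_b : lam * RInt (lagr_b lam a b) a b = hat_mass (lam * (b - a)).
Proof.
  pose proof sin_pos.
  rewrite (RInt_of_antiderivative (fun x => - cos (lam * (x - a)) / (lam * sin (lam * (b - a))))).
  - unfold hat_mass. rewrite (Rminus_diag a), Rmult_0_r, cos_0. field. split; lra.
  - intros x. auto_derive; [exact I|]. unfold lagr_b.
    replace (x + - a) with (x - a) by ring. field. split; lra.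
  - apply cont_lagr_b.
Qed.

Lemma RInt_interp_lagr_a P c0 c1 :
  (forall x, a <= x <= b -> P x = c0 * lagr_a lam a b x + c1 * lagr_b lam a b x) ->
  lam * RInt (fun x => P x * lagr_a lam a b x) a b
  = c0 * gram_diag (lam * (b - a)) + c1 * gram_off (lam * (b - a)).
Proof.
  intros HP. rewrite <- RInt_lagr_a_sqr, <- RInt_lagr_a_lagr_b.
  rewrite (RInt_ext_seg _ (fun x => c0 * (lagr_a lam a b x * lagr_a lam a b x)
                                    + c1 * (lagr_a lam a b x * lagr_b lam a b x)))
    by (lra || (intros x Hx; rewrite HP by lra; ring)).
  assert (E1 : ex_RInt (fun x => lagr_a lam a b x * lagr_a lam a b x) a b)
    by (apply cont_ex_RInt, cont_mult; auto using cont_lagr_a, cont_lagr_b).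
  assert (E2 : ex_RInt (fun x => lagr_a lam a b x * lagr_b lam a b x) a b)
    by (apply cont_ex_RInt, cont_mult; auto using cont_lagr_a, cont_lagr_b).
  rewrite RInt_plus_R, !RInt_scal_R by
    (assumption || apply (ex_RInt_scal (V := R_CompleteNormedModule)); assumption).
  ring.
Qed.

Lemma RInt_interp_lagr_b P c0 c1 :
  (forall x, a <= x <= b -> P x = c0 * lagr_a lam a b x + c1 * lagr_b lam a b x) ->
  lam * RInt (fun x => P x * lagr_b lam a b x) a b
  = c0 * gram_off (lam * (b - a)) + c1 * gram_diag (lam * (b - a)).
Proof.
  intros HP. rewrite <- RInt_lagr_b_sqr, <- RInt_lagr_a_lagr_b.
  rewrite (RInt_ext_seg _ (fun x => c0 * (lagr_a lam a b x * lagr_b lam a b x)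
                                    + c1 * (lagr_b lam a b x * lagr_b lam a b x)))
    by (lra || (intros x Hx; rewrite HP by lra; ring)).
  assert (E1 : ex_RInt (fun x => lagr_a lam a b x * lagr_b lam a b x) a b)
    by (apply cont_ex_RInt, cont_mult; auto using cont_lagr_a, cont_lagr_b).
  assert (E2 : ex_RInt (fun x => lagr_b lam a b x * lagr_b lam a b x) a b)
    by (apply cont_ex_RInt, cont_mult; auto using cont_lagr_a, cont_lagr_b).
  rewrite RInt_plus_R, !RInt_scal_R by
    (assumption || apply (ex_RInt_scal (V := R_CompleteNormedModule)); assumption).
  ring.
Qed.

Lemma abs_RInt_lagr_a_le F N : cont F -> (forall x, a <= x <= b -> Rabs (F x) <= N) ->
  Rabs (lam * RInt (fun x => F x * lagr_a lam a b x) a b) <= N * hat_mass (lam * (b - a)).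
Proof.
  intros HF HN. rewrite <- RInt_lagr_a, Rabs_mult, (Rabs_pos_eq lam) by lra.
  replace (N * (lam * _)) with (lam * (N * RInt (lagr_a lam a b) a b)) by ring.
  apply Rmult_le_compat_l; [lra|].
  apply abs_RInt_weighted_le; [lra|exact HF|apply cont_lagr_a|].
  intros x Hx. split; [apply lagr_a_ge0, Hx|apply HN, Hx].
Qed.

Lemma abs_RInt_lagr_b_le F N : cont F -> (forall x, a <= x <= b -> Rabs (F x) <= N) ->
  Rabs (lam * RInt (fun x => F x * lagr_b lam a b x) a b) <= N * hat_mass (lam * (b - a)).
Proof.
  intros HF HN. rewrite <- RInt_lagr_b, Rabs_mult, (Rabs_pos_eq lam) by lra.
  replace (N * (lam * _)) with (lam * (N * RInt (lagr_b lam a b) a b)) by ring.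
  apply Rmult_le_compat_l; [lra|].
  apply abs_RInt_weighted_le; [lra|exact HF|apply cont_lagr_b|].
  intros x Hx. split; [apply lagr_b_ge0, Hx|apply HN, Hx].
Qed.

(* Each of the two integrals alone is only bounded by [N * hat_mass], which blows up as the
   piece length tends to [PI / lam]; their difference stays bounded. *)
Lemma abs_RInt_lagr_diff_le F N : cont F -> (forall x, a <= x <= b -> Rabs (F x) <= N) ->
  1/2 <= sin (lam * (b - a) / 2) ->
  Rabs (lam * RInt (fun x => F x * lagr_a lam a b x) a b
        - lam * RInt (fun x => F x * lagr_b lam a b x) a b) <= 2 * N * (lam * (b - a)).
Proof.
  intros HF HN Hhalf.
  assert (HN0 : 0 <= N) by (apply Rle_trans with (Rabs (F a)); [apply Rabs_pos|apply HN; lra]).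
  rewrite <- Rmult_minus_distr_l, <- RInt_minus_R
    by (apply cont_ex_RInt, cont_mult; auto using cont_lagr_a, cont_lagr_b).
  rewrite Rabs_mult, (Rabs_pos_eq lam) by lra.
  replace (2 * N * (lam * (b - a))) with (lam * ((b - a) * (N * 2))) by ring.
  apply Rmult_le_compat_l; [lra|].
  apply abs_RInt_le_const; [lra|apply cont_ex_RInt, cont_minus; apply cont_mult;
                                 auto using cont_lagr_a, cont_lagr_b|].
  intros x Hx. rewrite <- Rmult_minus_distr_l, Rabs_mult.
  apply Rmult_le_compat; [apply Rabs_pos|apply Rabs_pos|apply HN, Hx|].
  unfold lagr_a, lagr_b, Rdiv. rewrite <- Rmult_minus_distr_r.
  apply abs_sin_diff_div_le; [ring|split; [apply Rmult_lt_0_compat|]; lra|exact Hhalf].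
Qed.

End Piece.

(** * Hat functions of a partition *)

Section Partition.
Variables (lam : R) (n : nat) (t : nat -> R).
Hypothesis Hlam : 0 < lam.
Hypothesis Hinc : forall i, (i < n)%nat -> t i < t (S i).
Hypothesis Hpi : forall i, (i < n)%nat -> lam * (t (S i) - t i) < PI.

Definition scaled_len m := lam * (t (S m) - t m).
Definition U m := lagr_a lam (t m) (t (S m)).
Definition W m := lagr_b lam (t m) (t (S m)).

(* [W (k-1)] rises from 0 to 1 on the piece left of [t k] and [U k] falls from 1 to 0 on the
   piece right of it; clamping freezes both outside their piece, so [hat k] is the spline
   equal to 1 at [t k] and to 0 at every other node. *)
Definition hat k y :=
  (if Nat.eqb k 0 then 1 else W (k-1) (clamp (t (k-1)) (t k) y)) +
  (if Nat.ltb k n then U k (clamp (t k) (t (S k)) y) else 1) - 1.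

Lemma t_le i k : (i <= k)%nat -> (k <= n)%nat -> t i <= t k.
Proof.
  intros Hik Hkn. induction k as [|k IH]; [replace i with 0%nat by lia; lra|].
  destruct (Nat.eq_dec i (S k)) as [->|]; [lra|].
  specialize (IH ltac:(lia) ltac:(lia)). specialize (Hinc k ltac:(lia)). lra.
Qed.

Lemma piece_len_le_rest j m : (j < n)%nat -> (m < n)%nat -> m <> j ->
  t (S m) - t m <= (t n - t 0) - (t (S j) - t j).
Proof.
  intros Hj Hm Hmj. destruct (Nat.lt_ge_cases m j).
  - pose proof (t_le (S m) j ltac:(lia) ltac:(lia)). pose proof (t_le 0 m ltac:(lia) ltac:(lia)).
    pose proof (t_le (S j) n ltac:(lia) ltac:(lia)). lra.
  - pose proof (t_le (S j) m ltac:(lia) ltac:(lia)). pose proof (t_le 0 j ltac:(lia) ltac:(lia)).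
    pose proof (t_le (S m) n ltac:(lia) ltac:(lia)). lra.
Qed.

Lemma t_pred_lt k : (0 < k)%nat -> (k <= n)%nat -> t (k-1) < t k.
Proof. intros. replace k with (S (k-1)) at 2 by lia. apply Hinc. lia. Qed.

Lemma U_at_left m : (m < n)%nat -> U m (t m) = 1.
Proof. intros. apply lagr_a_at_a; auto. Qed.

Lemma W_at_right k : (0 < k)%nat -> (k <= n)%nat -> W (k-1) (t k) = 1.
Proof.
  intros. unfold W. replace (S (k-1)) with k by lia.
  apply lagr_b_at_b; [exact Hlam|apply t_pred_lt; lia|].
  replace k with (S (k-1)) at 1 by lia. apply Hpi. lia.
Qed.

Lemma cont_hat k : cont (hat k).
Proof.
  unfold hat. apply cont_minus; [apply cont_plus|apply cont_const].
  - destruct (Nat.eqb k 0); [apply cont_const|].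
    apply (cont_comp (clamp _ _) (W _)); [apply cont_clamp|apply cont_lagr_b].
  - destruct (Nat.ltb k n); [|apply cont_const].
    apply (cont_comp (clamp _ _) (U _)); [apply cont_clamp|apply cont_lagr_a].
Qed.

Lemma hat_left k x : (0 < k)%nat -> (k <= n)%nat -> t (k-1) <= x <= t k -> hat k x = W (k-1) x.
Proof.
  intros Hk Hkn Hx. unfold hat.
  rewrite (proj2 (Nat.eqb_neq k 0)), (clamp_id (t (k-1)) (t k) x) by (lia || lra).
  destruct (Nat.ltb_spec k n) as [Hlt|]; [|ring].
  rewrite clamp_lo, U_at_left by (auto; pose proof (Hinc k Hlt); lra). ring.
Qed.

Lemma hat_right k x : (k < n)%nat -> t k <= x <= t (S k) -> hat k x = U k x.
Proof.
  intros Hk Hx. unfold hat.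
  rewrite (proj2 (Nat.ltb_lt k n) Hk), (clamp_id (t k) (t (S k)) x) by lra.
  destruct (Nat.eqb_spec k 0) as [|Hk0]; [ring|].
  rewrite (clamp_hi (t (k-1))), W_at_right
    by (lia || (pose proof (t_pred_lt k ltac:(lia) ltac:(lia)); lra)). ring.
Qed.

Lemma hat_far k x : (k <= n)%nat ->
  ((0 < k)%nat /\ x <= t (k-1)) \/ ((k < n)%nat /\ t (S k) <= x) -> hat k x = 0.
Proof.
  intros Hkn [[Hk Hx]|[Hk Hx]]; unfold hat.
  - pose proof (t_pred_lt k Hk Hkn).
    rewrite (proj2 (Nat.eqb_neq k 0)), (clamp_lo (t (k-1))) by (lia || lra).
    unfold W. rewrite lagr_b_at_a.
    destruct (Nat.ltb_spec k n) as [Hlt|]; [|ring].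
    rewrite (clamp_lo (t k)), U_at_left by (auto; pose proof (Hinc k Hlt); lra). ring.
  - pose proof (Hinc k Hk).
    rewrite (proj2 (Nat.ltb_lt k n) Hk), (clamp_hi (t k)) by lra. unfold U. rewrite lagr_a_at_b.
    destruct (Nat.eqb_spec k 0) as [|Hk0]; [ring|].
    rewrite (clamp_hi (t (k-1))), W_at_right
    by (lia || (pose proof (t_pred_lt k ltac:(lia) ltac:(lia)); lra)). ring.
Qed.

Lemma hat_on_piece m k x : (m < n)%nat -> (k <= n)%nat -> t m <= x <= t (S m) ->
  hat k x = (if Nat.eqb k m then U m x else 0) + (if Nat.eqb k (S m) then W m x else 0).
Proof.
  intros Hm Hk Hx.
  destruct (Nat.eqb_spec k m) as [->|Hkm]; [|destruct (Nat.eqb_spec k (S m)) as [->|Hkm']].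
  - rewrite (proj2 (Nat.eqb_neq m (S m))) by lia. rewrite hat_right by assumption. ring.
  - rewrite hat_left by (lia || (replace (S m - 1)%nat with m by lia; lra)).
    replace (S m - 1)%nat with m by lia. ring.
  - rewrite hat_far; [ring|assumption|].
    destruct (Nat.lt_ge_cases k m).
    + right. split; [lia|]. pose proof (t_le (S k) m ltac:(lia) ltac:(lia)). lra.
    + left. split; [lia|]. pose proof (t_le (S m) (k-1) ltac:(lia) ltac:(lia)). lra.
Qed.

Lemma piece_of x : (0 < n)%nat -> t 0 <= x <= t n -> exists m, (m < n)%nat /\ t m <= x <= t (S m).
Proof.
  intros Hn Hx.
  assert (H : forall K, (0 < K)%nat -> (K <= n)%nat -> x <= t K ->
              exists m, (m < K)%nat /\ t m <= x <= t (S m)).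
  { induction K as [|K IH]; intros HK HKn HxK; [lia|].
    destruct (Rle_dec x (t K)) as [Hle|Hgt].
    - destruct (Nat.eq_dec K 0) as [->|HK0]; [exists 0%nat; split; [lia|lra]|].
      destruct (IH ltac:(lia) ltac:(lia) Hle) as [m [Hm Hxm]]. exists m. split; [lia|exact Hxm].
    - exists K. split; [lia|lra]. }
  apply H; [exact Hn|lia|lra].
Qed.

Lemma trig_spline_on_piece a b s m x : trig_spline lam a b n t s -> (m < n)%nat ->
  t m <= x <= t (S m) -> s x = s (t m) * U m x + s (t (S m)) * W m x.
Proof.
  intros [_ Hs] Hm Hx. pose proof (Hinc m Hm).
  destruct (Hs m Hm) as [al [be Hab]].
  rewrite !Hab by lra. apply (trig_interp lam (t m) (t (S m))); auto.
Qed.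

Lemma trig_spline_hat a b k : (k <= n)%nat -> trig_spline lam a b n t (hat k).
Proof.
  intros Hk. split; [apply cont_cont_on, cont_hat|].
  intros i Hi. destruct (lagr_a_trig lam (t i) (t (S i))) as [a1 [b1 HU]].
  destruct (lagr_b_trig lam (t i) (t (S i))) as [a2 [b2 HW]].
  exists ((if Nat.eqb k i then a1 else 0) + (if Nat.eqb k (S i) then a2 else 0)),
         ((if Nat.eqb k i then b1 else 0) + (if Nat.eqb k (S i) then b2 else 0)).
  intros x Hx. rewrite (hat_on_piece i k x Hi Hk Hx). unfold U, W. rewrite HU, HW.
  destruct (Nat.eqb k i), (Nat.eqb k (S i)); ring.
Qed.

Lemma trig_spline_plus_scal a b s1 s2 r :
  trig_spline lam a b n t s1 -> trig_spline lam a b n t s2 ->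
  trig_spline lam a b n t (fun x => s1 x + r * s2 x).
Proof.
  intros [C1 P1] [C2 P2]. split.
  - intros x Hx. specialize (C1 x Hx). specialize (C2 x Hx).
    apply (filterlim_comp_2 (F := within (in_seg a b) (locally x)) (G := locally (s1 x))
             (H := locally (r * s2 x)) s1 (fun y => r * s2 y) Rplus); [exact C1| |].
    + apply (filterlim_comp _ _ _ s2 (fun z => r * z) _ (locally (s2 x))); [exact C2|].
      apply (continuous_mult (fun _ => r) (fun z => z));
        [apply continuous_const|apply continuous_id].
    + apply (filterlim_plus (K := R_AbsRing) (V := R_NormedModule)).
  - intros i Hi. destruct (P1 i Hi) as [a1 [b1 H1]]. destruct (P2 i Hi) as [a2 [b2 H2]].
    exists (a1 + r * a2), (b1 + r * b2). intros x Hx. rewrite H1, H2 by exact Hx. ring.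
Qed.

Lemma trig_spline_lin_comb_hat a b c K :
  (K <= S n)%nat -> trig_spline lam a b n t (lin_comb hat c K).
Proof.
  induction K as [|K IH]; intros HK; simpl.
  - split; [apply cont_cont_on, cont_const|]. intros i Hi. exists 0, 0. intros; ring.
  - apply trig_spline_plus_scal; [apply IH; lia|apply trig_spline_hat; lia].
Qed.

Lemma lin_comb_hat_on_piece m c x K : (m < n)%nat -> t m <= x <= t (S m) -> (K <= S n)%nat ->
  lin_comb hat c K x =
  (if Nat.ltb m K then c m * U m x else 0) + (if Nat.ltb (S m) K then c (S m) * W m x else 0).
Proof.
  intros Hm Hx. induction K as [|K IH]; intros HK; simpl; [ring|].
  rewrite IH, (hat_on_piece m K x) by (auto; lia).
  destruct (Nat.ltb_spec m K), (Nat.ltb_spec m (S K)), (Nat.ltb_spec (S m) K),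
    (Nat.ltb_spec (S m) (S K)), (Nat.eqb_spec K m), (Nat.eqb_spec K (S m));
    try lia; subst; ring.
Qed.

Lemma trig_spline_eq_lin_comb_hat s : (0 < n)%nat -> trig_spline lam (t 0) (t n) n t s ->
  forall x, t 0 <= x <= t n -> s x = lin_comb hat (fun k => s (t k)) (S n) x.
Proof.
  intros Hn Hs x Hx. destruct (piece_of x Hn Hx) as [m [Hm Hxm]].
  rewrite (lin_comb_hat_on_piece m), (proj2 (Nat.ltb_lt m (S n))), (proj2 (Nat.ltb_lt (S m) (S n)))
    by (auto; lia).
  apply (trig_spline_on_piece _ _ s m x Hs Hm Hxm).
Qed.

(* Since every spline is a combination of hats on [t 0, t n], testing against hats suffices. *)
Lemma exists_orth_proj f : (0 < n)%nat -> cont_on (t 0) (t n) f ->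
  exists p, is_orth_proj lam (t 0) (t n) n t f p.
Proof.
  intros Hn Hf. assert (H0n : t 0 <= t n) by (apply t_le; lia).
  set (ft := fun x => f (clamp (t 0) (t n) x)).
  assert (Hft : cont ft) by (apply cont_on_clamp; assumption).
  destruct (exists_orth_coeffs (t 0) (t n) hat H0n cont_hat (S n) ft Hft) as [c Hc].
  exists (lin_comb hat c (S n)). split; [apply trig_spline_lin_comb_hat; lia|].
  intros s Hs.
  set (sr := lin_comb hat (fun k => s (t k)) (S n)).
  assert (Hsr : forall x, t 0 < x < t n -> s x = sr x)
    by (intros; apply trig_spline_eq_lin_comb_hat; auto; lra).
  assert (Ef : L2ip (t 0) (t n) f s = L2ip (t 0) (t n) ft sr).
  { rewrite <- (L2ip_clamp _ _ f) by exact H0n.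
    apply L2ip_ext; [exact H0n|]. intros x Hx. split; [reflexivity|apply Hsr, Hx]. }
  assert (Ep : L2ip (t 0) (t n) (lin_comb hat c (S n)) s
               = L2ip (t 0) (t n) (lin_comb hat c (S n)) sr).
  { apply L2ip_ext; [exact H0n|]. intros x Hx. split; [reflexivity|apply Hsr, Hx]. }
  assert (Hc_lc : cont (lin_comb hat c (S n))) by exact (cont_lin_comb _ _ _ cont_hat).
  assert (Hc_sr : cont sr) by exact (cont_lin_comb _ _ _ cont_hat).
  rewrite Ef, Ep. apply Rminus_diag_uniq. rewrite <- L2ip_minus_l by assumption.
  apply L2ip_lin_comb_r_eq0; [exact cont_hat|apply cont_minus; assumption|].
  intros k Hk. rewrite L2ip_minus_l, Hc by (assumption || apply cont_hat). ring.
Qed.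

(** * The Gram system *)

(* Row [k] of the Gram system, scaled by [lam], split into the contributions of the pieces left
   and right of [t k]: [left_row c k + right_row c k] is [lam * <s, hat k>] for the spline [s] with
   nodal values [c], and [left_load F k + right_load F k] is [lam * <F, hat k>]. *)
Definition left_load F k :=
  if Nat.eqb k 0 then 0 else lam * RInt (fun x => F x * W (k-1) x) (t (k-1)) (t k).
Definition right_load F k :=
  if Nat.ltb k n then lam * RInt (fun x => F x * U k x) (t k) (t (S k)) else 0.

Definition left_row c k :=
  if Nat.eqb k 0 then 0
  else c (k-1)%nat * gram_off (scaled_len (k-1)) + c k * gram_diag (scaled_len (k-1)).
Definition right_row c k :=
  if Nat.ltb k n then c k * gram_diag (scaled_len k) + c (S k) * gram_off (scaled_len k) else 0.

Lemma RInt_mul_hat F k : cont F -> (0 < n)%nat -> (k <= n)%nat ->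
  lam * RInt (fun x => F x * hat k x) (t 0) (t n) = left_load F k + right_load F k.
Proof.
  intros HF Hn Hk. set (G := fun x => F x * hat k x).
  assert (HG : cont G) by (apply cont_mult; [exact HF|apply cont_hat]).
  set (hi := if Nat.ltb k n then t (S k) else t k).
  assert (Hhi : t k <= hi <= t n)
    by (unfold hi; destruct (Nat.ltb_spec k n); split; apply t_le; lia).
  assert (Hlo : t 0 <= t (k-1) <= t k) by (split; apply t_le; lia).
  rewrite <- (RInt_Chasles_R G (t 0) (t (k-1)) (t n)), <- (RInt_Chasles_R G (t (k-1)) (t k) (t n)),
    <- (RInt_Chasles_R G (t k) hi (t n)) by exact HG.
  assert (Zlo : RInt G (t 0) (t (k-1)) = 0).
  { rewrite (RInt_ext_seg _ (fun _ => 0)) by (lra || (intros x Hx; unfold G;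
      rewrite hat_far; [ring|exact Hk|left; split; [destruct k; simpl in Hx; [lra|lia]|lra]])).
    apply RInt_zero. }
  assert (Zhi : RInt G hi (t n) = 0).
  { unfold hi in *. destruct (Nat.ltb_spec k n) as [Hkn|Hkn].
    - rewrite (RInt_ext_seg _ (fun _ => 0)) by (lra || (intros x Hx; unfold G;
        rewrite hat_far; [ring|exact Hk|right; split; [exact Hkn|lra]])).
      apply RInt_zero.
    - replace k with n by lia. apply (RInt_point (V := R_CompleteNormedModule)). }
  assert (Eleft : lam * RInt G (t (k-1)) (t k) = left_load F k).
  { unfold left_load. destruct (Nat.eqb_spec k 0) as [->|Hk0].
    - rewrite (RInt_point (V := R_CompleteNormedModule)). apply Rmult_0_r.
    - f_equal. apply RInt_ext_seg; [lra|]. intros x Hx. unfold G. rewrite hat_left by (lia || lra).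
      reflexivity. }
  assert (Eright : lam * RInt G (t k) hi = right_load F k).
  { unfold right_load, hi. destruct (Nat.ltb_spec k n) as [Hkn|Hkn].
    - f_equal. apply RInt_ext_seg; [apply Rlt_le, Hinc, Hkn|]. intros x Hx. unfold G.
      rewrite hat_right by (auto; lra). reflexivity.
    - rewrite (RInt_point (V := R_CompleteNormedModule)). apply Rmult_0_r. }
  rewrite Zlo, Zhi, <- Eleft, <- Eright. ring.
Qed.

Section Interpolant.
Variables (P : R -> R) (c : nat -> R).
Hypothesis HP : forall m x, (m < n)%nat -> t m <= x <= t (S m) ->
  P x = c m * U m x + c (S m) * W m x.

Lemma left_load_interp k : (k <= n)%nat -> left_load P k = left_row c k.
Proof.
  intros Hk. unfold left_load, left_row. destruct (Nat.eqb_spec k 0) as [|Hk0]; [reflexivity|].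
  assert (Hm : (k - 1 < n)%nat) by lia.
  pose proof (Hinc _ Hm) as Hm'. pose proof (Hpi _ Hm) as Hm_pi.
  pose proof (fun x => HP (k-1) x Hm) as HPk. unfold U, W, scaled_len in *.
  replace (S (k-1)) with k in * by lia.
  apply RInt_interp_lagr_b; [exact Hlam|exact Hm'|exact Hm_pi|exact HPk].
Qed.

Lemma right_load_interp k : right_load P k = right_row c k.
Proof.
  unfold right_load, right_row. destruct (Nat.ltb_spec k n) as [Hk|]; [|reflexivity].
  apply RInt_interp_lagr_a; [exact Hlam|apply Hinc, Hk|apply Hpi, Hk|].
  intros x Hx. apply HP; assumption.
Qed.

End Interpolant.

Section Load.
Variables (F : R -> R) (N : R).
Hypothesis HF : cont F.
Hypothesis HN : forall x, Rabs (F x) <= N.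

Lemma abs_left_load_le k : (k <= n)%nat ->
  Rabs (left_load F k) <= N * (if Nat.eqb k 0 then 0 else hat_mass (scaled_len (k-1))).
Proof.
  intros Hk. unfold left_load. destruct (Nat.eqb_spec k 0) as [|Hk0].
  - rewrite Rabs_R0, Rmult_0_r. apply Rle_refl.
  - assert (Hm : (k - 1 < n)%nat) by lia.
    pose proof (Hinc _ Hm) as Hm'. pose proof (Hpi _ Hm) as Hm_pi.
    unfold W, scaled_len. replace (S (k-1)) with k in * by lia.
    apply abs_RInt_lagr_b_le; [exact Hlam|exact Hm'|exact Hm_pi|exact HF|intros; apply HN].
Qed.

Lemma abs_right_load_le k :
  Rabs (right_load F k) <= N * (if Nat.ltb k n then hat_mass (scaled_len k) else 0).
Proof.
  unfold right_load. destruct (Nat.ltb_spec k n) as [Hk|].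
  - apply abs_RInt_lagr_a_le; [exact Hlam|apply Hinc, Hk|apply Hpi, Hk|exact HF|intros; apply HN].
  - rewrite Rabs_R0, Rmult_0_r. apply Rle_refl.
Qed.

End Load.

End Partition.

(** * Bounding the nodal values *)

Lemma mul_row_term_ge c c' A B : Rabs c' <= Rabs c -> 0 <= B ->
  c * c * (A - B) <= c * (c * A + c' * B).
Proof.
  intros Hc HB.
  assert (Hcc : Rabs (c * c') <= c * c).
  { rewrite Rabs_mult, <- (Rabs_pos_eq (c * c)) by apply Rle_0_sqr. rewrite Rabs_mult.
    apply Rmult_le_compat_l; [apply Rabs_pos|exact Hc]. }
  apply Rabs_le_between in Hcc. nra.
Qed.

Lemma abs_le_of_dominant_row c X D G N : 0 < D -> G <= 4 * D -> 0 <= N ->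
  c * c * D <= c * X -> Rabs X <= N * G -> Rabs c <= 4 * N.
Proof.
  intros HD HG HN HcX HX.
  assert (HcX' : c * X <= Rabs c * (4 * N * D)).
  { apply Rle_trans with (Rabs c * Rabs X); [rewrite <- Rabs_mult; apply Rle_abs|].
    apply Rmult_le_compat_l; [apply Rabs_pos|]. nra. }
  assert (Hsq : c * c = Rabs c * Rabs c)
    by (rewrite <- Rabs_mult; symmetry; apply Rabs_pos_eq, Rle_0_sqr).
  assert (Hc : Rabs c * Rabs c <= Rabs c * (4 * N)).
  { apply (Rmult_le_reg_r D); [exact HD|]. rewrite <- Hsq. lra. }
  pose proof (Rabs_pos c). nra.
Qed.

Lemma abs_comb_le c1 c2 a b M : Rabs c1 <= M -> Rabs c2 <= M -> 0 <= a -> 0 <= b ->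
  Rabs (c1 * a + c2 * b) <= M * (a + b).
Proof.
  intros H1 H2 Ha Hb. apply Rabs_le_between in H1, H2. apply Rabs_le_between. split; nra.
Qed.

(* The constant 9 absorbs (7 e + 4 PI) / (2 - 5 e) for e <= 1/50. *)
Lemma abs_pair_le_of_sum_diff x y A B N M s e :
  0 < s <= e -> e <= 1/50 -> 0 <= N -> (M = Rabs x \/ M = Rabs y) ->
  1/2 <= A - B -> 2 / s^2 <= A + B ->
  Rabs (x - y) * (A - B) <= 2 * N * e + 2 * N * PI + 2 * M * e ->
  Rabs (x + y) * (A + B) <= 2 * N * e + 4 * N / s + 2 * M * e ->
  M <= 9 * N.
Proof.
  intros Hs He HN HM HD HS Hdiff Hsum. pose proof PI_4.
  assert (HM0 : 0 <= M) by (destruct HM as [->| ->]; apply Rabs_pos).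
  assert (Hd : Rabs (x - y) <= 4 * N * e + 4 * N * PI + 4 * M * e).
  { pose proof (Rabs_pos (x - y)). nra. }
  assert (Hsum' : Rabs (x + y) <= N * e * s^2 + 2 * N * s + M * e * s^2).
  { assert (Hs2 : 0 < s^2) by (apply pow_lt; lra).
    assert (Hle : Rabs (x + y) * (2 / s^2) <= 2 * N * e + 4 * N / s + 2 * M * e)
      by (apply Rle_trans with (Rabs (x + y) * (A + B));
          [apply Rmult_le_compat_l; [apply Rabs_pos|exact HS]|exact Hsum]).
    apply (Rmult_le_compat_r (s^2 / 2)) in Hle; [|lra].
    replace (Rabs (x + y) * (2 / s ^ 2) * (s ^ 2 / 2)) with (Rabs (x + y)) in Hle by (field; lra).
    replace ((2 * N * e + 4 * N / s + 2 * M * e) * (s ^ 2 / 2))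
      with (N * e * s^2 + 2 * N * s + M * e * s^2) in Hle by (field; lra).
    exact Hle. }
  assert (Hsum_abs : Rabs (x + y) <= 3 * N * e + M * e).
  { assert (Hs1 : s^2 <= 1) by (simpl; nra).
    assert (N * e * s^2 <= N * e * 1) by (apply Rmult_le_compat_l; nra).
    assert (M * e * s^2 <= M * e * 1) by (apply Rmult_le_compat_l; nra).
    assert (N * s <= N * e) by (apply Rmult_le_compat_l; lra).
    lra. }
  assert (H2M : 2 * M <= Rabs (x + y) + Rabs (x - y)).
  { destruct HM as [-> | ->].
    - replace (2 * Rabs x) with (Rabs ((x + y) + (x - y))) by
        (replace ((x + y) + (x - y)) with (2 * x) by ring; rewrite Rabs_mult, Rabs_pos_eq; lra).
      apply Rabs_triang.
    - replace (2 * Rabs y) with (Rabs ((x + y) - (x - y))) by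
        (replace ((x + y) - (x - y)) with (2 * y) by ring; rewrite Rabs_mult, Rabs_pos_eq; lra).
      eapply Rle_trans; [apply Rabs_triang|]. rewrite Rabs_Ropp. lra. }
  nra.
Qed.

Lemma exists_argmax (a : nat -> R) n :
  exists i, (i <= n)%nat /\ forall k, (k <= n)%nat -> a k <= a i.
Proof.
  induction n as [|n [i [Hi H]]].
  - exists 0%nat. split; [lia|]. intros k Hk. replace k with 0%nat by lia. lra.
  - destruct (Rle_dec (a i) (a (S n))).
    + exists (S n). split; [lia|]. intros k Hk.
      destruct (Nat.eq_dec k (S n)) as [->|]; [lra|]. specialize (H k ltac:(lia)). lra.
    + exists i. split; [lia|]. intros k Hk.
      destruct (Nat.eq_dec k (S n)) as [->|]; [lra|]. apply H. lia.
Qed.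

Section Estimate.
Variables (lam eps : R) (n j : nat) (t : nat -> R) (f p : R -> R).
Hypothesis Hlam : 0 < lam.
Hypothesis Hinc : forall i, (i < n)%nat -> t i < t (S i).
Hypothesis Hj : (j < n)%nat.
Hypothesis He : 0 < lam * eps <= 1/50.
Hypothesis Hlong : scaled_len lam t j = PI - lam * eps.
Hypothesis Hshort : forall m, (m < n)%nat -> m <> j -> scaled_len lam t m <= lam * eps.
Hypothesis Hf : cont_on (t 0) (t n) f.
Hypothesis Hp : is_orth_proj lam (t 0) (t n) n t f p.

Local Notation N := (sup_norm (t 0) (t n) f).
Local Notation ft := (fun x => f (clamp (t 0) (t n) x)).
Local Notation pt := (fun x => p (clamp (t 0) (t n) x)).
Local Notation c := (fun k => p (t k)).

Let Hpi i : (i < n)%nat -> scaled_len lam t i < PI.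
Proof.
  intros Hi. destruct (Nat.eq_dec i j) as [->|Hij]; [lra|].
  specialize (Hshort i Hi Hij). pose proof PI_ge_8_3. lra.
Qed.

Let H0n : t 0 <= t n.
Proof. apply (t_le n t Hinc); lia. Qed.

Let ft_cont : cont ft.
Proof. apply cont_on_clamp; assumption. Qed.

Let pt_cont : cont pt.
Proof. apply cont_on_clamp; [exact H0n|apply Hp]. Qed.

Let ft_bound x : Rabs (ft x) <= N.
Proof. cbv beta. apply sup_norm_ge; [exact Hf|apply clamp_in, H0n]. Qed.

Let N_ge0 : 0 <= N.
Proof. apply sup_norm_ge0; assumption. Qed.

Let p_interp m x : (m < n)%nat -> t m <= x <= t (S m) ->
  pt x = c m * U lam t m x + c (S m) * W lam t m x.
Proof.
  intros Hm Hx. cbv beta. rewrite clamp_id.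
  - apply (trig_spline_on_piece lam n t Hlam Hinc Hpi _ _ p m x (proj1 Hp) Hm Hx).
  - pose proof (t_le n t Hinc 0 m ltac:(lia) ltac:(lia)).
    pose proof (t_le n t Hinc (S m) n ltac:(lia) ltac:(lia)). lra.
Qed.

Lemma gram_row k : (k <= n)%nat ->
  left_row lam t c k + right_row lam n t c k = left_load lam t ft k + right_load lam n t ft k.
Proof.
  intros Hk.
  rewrite <- (left_load_interp lam n t Hlam Hinc Hpi pt c p_interp k Hk),
          <- (right_load_interp lam n t Hlam Hinc Hpi pt c p_interp k),
          <- (RInt_mul_hat lam n t Hlam Hinc Hpi _ k ft_cont),
          <- (RInt_mul_hat lam n t Hlam Hinc Hpi _ k pt_cont) by lia.
  f_equal.
  pose proof (proj2 Hp (hat lam n t k) (trig_spline_hat lam n t Hlam Hinc Hpi _ _ k Hk)) as H.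
  rewrite <- (L2ip_clamp _ _ f), <- (L2ip_clamp _ _ p) in H by exact H0n.
  symmetry. exact H.
Qed.

Let short_coefs m : (m < n)%nat -> m <> j ->
  let h := scaled_len lam t m in
  hat_mass h / 4 <= gram_diag h - gram_off h /\ gram_diag h + gram_off h <= lam * eps /\
  0 <= gram_off h /\ 0 < hat_mass h <= lam * eps.
Proof.
  intros Hm Hmj. cbv zeta. pose proof (Hshort m Hm Hmj) as Hle.
  assert (Hh : 0 < scaled_len lam t m)
    by (apply Rmult_lt_0_compat; [exact Hlam|pose proof (Hinc m Hm); lra]).
  destruct (short_piece_coefs (scaled_len lam t m)) as [H1 [H2 [H3 H4]]]; [lra|].
  repeat split; lra.
Qed.

Lemma node_bound_off_long k : (k <= n)%nat -> k <> j -> k <> S j ->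
  (forall i, (i <= n)%nat -> Rabs (c i) <= Rabs (c k)) -> Rabs (c k) <= 4 * N.
Proof.
  intros Hk Hkj HkSj Hmax.
  assert (Hl : k <> 0%nat -> let h := scaled_len lam t (k-1) in
     hat_mass h / 4 <= gram_diag h - gram_off h /\ 0 <= gram_off h /\ 0 < hat_mass h /\
     c k * c k * (gram_diag h - gram_off h)
       <= c k * (c k * gram_diag h + c (k-1)%nat * gram_off h)).
  { intros Hk0. cbv zeta. destruct (short_coefs (k-1) ltac:(lia) ltac:(lia)) as [H1 [_ [H3 H4]]].
    repeat split; try lra. apply mul_row_term_ge; [apply Hmax; lia|exact H3]. }
  assert (Hr : (k < n)%nat -> let h := scaled_len lam t k in
     hat_mass h / 4 <= gram_diag h - gram_off h /\ 0 <= gram_off h /\ 0 < hat_mass h /\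
     c k * c k * (gram_diag h - gram_off h)
       <= c k * (c k * gram_diag h + c (S k) * gram_off h)).
  { intros Hkn. cbv zeta. destruct (short_coefs k Hkn Hkj) as [H1 [_ [H3 H4]]].
    repeat split; try lra. apply mul_row_term_ge; [apply Hmax; lia|exact H3]. }
  apply (abs_le_of_dominant_row (c k) (left_row lam t c k + right_row lam n t c k)
    ((if Nat.eqb k 0 then 0
      else gram_diag (scaled_len lam t (k-1)) - gram_off (scaled_len lam t (k-1))) +
     (if Nat.ltb k n then gram_diag (scaled_len lam t k) - gram_off (scaled_len lam t k) else 0))
    ((if Nat.eqb k 0 then 0 else hat_mass (scaled_len lam t (k-1))) +
     (if Nat.ltb k n then hat_mass (scaled_len lam t k) else 0)) N); try exact N_ge0.
  4: { rewrite gram_row, Rmult_plus_distr_l by exact Hk.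
       eapply Rle_trans; [apply Rabs_triang|].
       apply Rplus_le_compat; [apply (abs_left_load_le lam n t)|apply (abs_right_load_le lam n t)];
         assumption || apply ft_cont || apply ft_bound. }
  all: unfold left_row, right_row; simpl in Hl, Hr.
  all: destruct (Nat.eqb_spec k 0) as [Hk0|Hk0], (Nat.ltb_spec k n) as [Hkn|Hkn]; try lia.
  all: try destruct (Hl Hk0) as [L1 [L2 [L3 L4]]]; try destruct (Hr Hkn) as [R1 [R2 [R3 R4]]].
  all: lra.
Qed.

Let half_long_sin : 1/2 <= sin (scaled_len lam t j / 2).
Proof.
  rewrite Hlong. replace ((PI - lam * eps) / 2) with (PI / 2 - lam * eps / 2) by field.
  rewrite sin_shift. destruct (cos_taylor_bounds (lam * eps / 2)) as [Hc _]; [lra|].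
  assert ((lam * eps / 2)^2 <= 1/10000) by (simpl; nra). lra.
Qed.

Local Notation FU := (lam * RInt (fun x => ft x * U lam t j x) (t j) (t (S j))).
Local Notation FW := (lam * RInt (fun x => ft x * W lam t j x) (t j) (t (S j))).

Lemma long_piece_rows :
  left_row lam t c j
    + (c j * gram_diag (scaled_len lam t j) + c (S j) * gram_off (scaled_len lam t j))
    = left_load lam t ft j + FU /\
  (c j * gram_off (scaled_len lam t j) + c (S j) * gram_diag (scaled_len lam t j))
    + right_row lam n t c (S j) = FW + right_load lam n t ft (S j).
Proof.
  split.
  - pose proof (gram_row j ltac:(lia)) as H. unfold right_row, right_load in H.
    rewrite (proj2 (Nat.ltb_lt j n) Hj) in H. exact H.
  - pose proof (gram_row (S j) ltac:(lia)) as H. unfold left_row, left_load in H.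
    simpl in H. rewrite Nat.sub_0_r in H. exact H.
Qed.

Lemma long_piece_neighbours M : (forall i, (i <= n)%nat -> Rabs (c i) <= M) ->
  Rabs (left_row lam t c j) <= M * (lam * eps) /\
  Rabs (right_row lam n t c (S j)) <= M * (lam * eps) /\
  Rabs (left_load lam t ft j) <= N * (lam * eps) /\
  Rabs (right_load lam n t ft (S j)) <= N * (lam * eps).
Proof.
  intros HM.
  assert (HM0 : 0 <= M) by (apply Rle_trans with (Rabs (c 0%nat)); [apply Rabs_pos|apply HM; lia]).
  assert (HFL := abs_left_load_le lam n t Hlam Hinc Hpi _ N ft_cont ft_bound j ltac:(lia)).
  assert (HFR := abs_right_load_le lam n t Hlam Hinc Hpi _ N ft_cont ft_bound (S j)).
  pose proof N_ge0. unfold left_row, right_row in *.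
  destruct (Nat.eqb_spec j 0) as [|Hj0], (Nat.ltb_spec (S j) n) as [HSj|HSj];
    try destruct (short_coefs (j-1) ltac:(lia) ltac:(lia)) as [L1 [L2 [L3 L4]]];
    try destruct (short_coefs (S j) HSj ltac:(lia)) as [R1 [R2 [R3 R4]]];
    rewrite ?Rabs_R0; repeat split; try nra;
    (eapply Rle_trans; [apply abs_comb_le; [apply HM; lia|apply HM; lia|lra|lra]|]; nra).
Qed.

Lemma long_piece_loads :
  Rabs FU <= N * (2 / sin (lam * eps)) /\ Rabs FW <= N * (2 / sin (lam * eps)) /\
  Rabs (FU - FW) <= 2 * N * PI.
Proof.
  pose proof (Hinc j Hj). pose proof (Hpi j Hj). pose proof N_ge0.
  destruct (long_piece_coefs (lam * eps) He) as [_ [_ [HG _]]]. rewrite <- Hlong in HG.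
  repeat split.
  - eapply Rle_trans; [apply abs_RInt_lagr_a_le; auto|]. apply Rmult_le_compat_l; assumption.
  - eapply Rle_trans; [apply abs_RInt_lagr_b_le; auto|]. apply Rmult_le_compat_l; assumption.
  - eapply Rle_trans; [apply abs_RInt_lagr_diff_le; auto; exact half_long_sin|].
    fold (scaled_len lam t j). rewrite Hlong. nra.
Qed.

(* The sum of the two rows at the ends of the long piece pins [c j + c (S j)] down, since
   [gram_diag + gram_off] is of order [1 / (lam eps)^2] there; their difference bounds
   [c j - c (S j)], since [gram_diag - gram_off >= 1/2]. *)
Lemma node_bound_long M : (forall i, (i <= n)%nat -> Rabs (c i) <= M) ->
  (M = Rabs (c j) \/ M = Rabs (c (S j))) -> M <= 9 * N.
Proof.
  intros HM HMj.
  destruct (long_piece_coefs (lam * eps) He) as [HD [HS [_ Hs]]]. rewrite <- Hlong in HD, HS.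
  destruct long_piece_rows as [Hrow_j Hrow_Sj].
  destruct (long_piece_neighbours M HM) as [HL [HR [HFL HFR]]].
  destruct long_piece_loads as [HFU [HFW HFUW]].
  set (A := gram_diag (scaled_len lam t j)) in *. set (B := gram_off (scaled_len lam t j)) in *.
  apply (abs_pair_le_of_sum_diff (c j) (c (S j)) A B N M (sin (lam * eps)) (lam * eps));
    try lra; try exact N_ge0; try exact HMj.
  - rewrite <- (Rabs_pos_eq (A - B)), <- Rabs_mult by lra.
    apply Rabs_le_between. apply Rabs_le_between in HL, HR, HFL, HFR, HFUW. split; lra.
  - assert (0 < 2 / sin (lam * eps) ^ 2) by (apply Rdiv_lt_0_compat; [lra|apply pow_lt; lra]).
    rewrite <- (Rabs_pos_eq (A + B)), <- Rabs_mult by lra.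
    apply Rabs_le_between. apply Rabs_le_between in HL, HR, HFL, HFR, HFU, HFW. split; lra.
Qed.

Lemma node_bound i : (i <= n)%nat -> Rabs (p (t i)) <= 9 * N.
Proof.
  intros Hi. destruct (exists_argmax (fun k => Rabs (c k)) n) as [k [Hk Hmax]].
  apply Rle_trans with (Rabs (c k)); [apply Hmax, Hi|].
  destruct (Nat.eq_dec k j) as [->|Hkj]; [apply node_bound_long; auto|].
  destruct (Nat.eq_dec k (S j)) as [->|HkSj]; [apply node_bound_long; auto|].
  pose proof (node_bound_off_long k Hk Hkj HkSj Hmax). pose proof N_ge0. lra.
Qed.

End Estimate.

Theorem mainTheorem4 :
  forall lam : R, 0 < lam ->
  exists C eps0 : R, 0 < eps0 /\
    forall eps : R, 0 < eps < eps0 ->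
    forall (n : nat) (t : nat -> R) (j : nat),
      is_partition 0 (PI / lam) n t ->
      (j < n)%nat ->
      t (S j) - t j = PI / lam - eps ->
      forall f : R -> R, cont_on 0 (PI / lam) f ->
        (exists p, is_orth_proj lam 0 (PI / lam) n t f p) /\
        (forall p, is_orth_proj lam 0 (PI / lam) n t f p ->
           forall i, (i <= n)%nat ->
             Rabs (p (t i)) <= (38 / PI + C * eps) * sup_norm 0 (PI / lam) f).
Proof.
  intros lam Hlam. exists 0, (1 / (50 * lam)). split; [apply Rdiv_lt_0_compat; lra|].
  intros eps Heps n t j [Hn [Ht0 [Htn Hinc]]] Hj Hlen f Hf.
  rewrite <- Htn in Hf, Hlen |- *. rewrite <- Ht0 in Hf.
  pose proof PI_ge_8_3.
  assert (He : 0 < lam * eps <= 1/50).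
  { split; [apply Rmult_lt_0_compat; lra|].
    assert (Hlt : lam * eps < lam * (1 / (50 * lam))) by (apply Rmult_lt_compat_l; lra).
    replace (lam * (1 / (50 * lam))) with (1/50) in Hlt by (field; lra). lra. }
  assert (Hlong : scaled_len lam t j = PI - lam * eps)
    by (unfold scaled_len; rewrite Hlen, Htn; field; lra).
  assert (Hshort : forall m, (m < n)%nat -> m <> j -> scaled_len lam t m <= lam * eps).
  { intros m Hm Hmj. apply Rmult_le_compat_l; [lra|].
    pose proof (piece_len_le_rest n t Hinc j m Hj Hm Hmj). lra. }
  assert (Hpi : forall m, (m < n)%nat -> scaled_len lam t m < PI).
  { intros m Hm. destruct (Nat.eq_dec m j) as [->|Hmj]; [lra|]. specialize (Hshort m Hm Hmj). lra. }
  split.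
  - rewrite <- Ht0. apply exists_orth_proj; assumption.
  - intros p Hp i Hi. rewrite Rmult_0_l, Rplus_0_r. rewrite <- Ht0 in Hp |- *.
    eapply Rle_trans; [apply (node_bound lam eps n j t f p); assumption|].
    apply Rmult_le_compat_r; [apply sup_norm_ge0; [apply (t_le n t Hinc); lia|exact Hf]|].
    apply (Rmult_le_reg_r PI); [lra|].
    replace (38 / PI * PI) with 38 by (field; lra). pose proof PI_4. lra.
Qed.
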